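(* Suppose Assumptions A1–A3 hold. Let $\bm{X}_t=\{\bm{x}_1,\dots,\bm{x}_t\}$ be generated by density-based exploration, $\bm{x}_{t+1}\in\arg\min_{\bm{x}\in\mathcal{X}}W_t(\bm{x})$ (equivalently $\arg\max\hat\sigma_t$), where $W_t$ uses bandwidth $\ell_t$ at iteration $t$. Then (i) if $\ell_t\equiv\ell$ is fixed, $\inf_t h_{\mathcal{X},\bm{X}_t}\le R_\Psi\ell$; (ii) there exists a bandwidth sequence $\ell_t\to0$ such that $\inf_t h_{\mathcal{X},\bm{X}_t}=0$.
   Context: A1: $\mathcal{X}\subset\mathbb{R}^d$ compact, convex, nonempty interior. A2: $f$ continuous (not used in the selection rule). A3: kernel $k(\bm{x},\bm{x}')=\Psi((\bm{x}-\bm{x}')/\ell)$ with bandwidth $\ell>0$, where $\Psi:\mathbb{R}^d\to[0,\infty)$ has support contained in $B(\bm{0},R_\Psi)$, is continuous at $\bm{0}$, $\Psi(\bm{0})>0$, $\sup\Psi\le M_\Psi$. $W_t(\bm{x})=\sum_{i=1}^tk(\bm{x},\bm{x}_i)$, $\hat\sigma_t=W_t^{-1/2}$ with $c/0=\infty$. Fill distance $h_{\mathcal{X},\bm{X}_t}=\sup_{\bm{x}\in\mathcal{X}}\min_{i\le t}\|\bm{x}-\bm{x}_i\|$. *)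

From HB Require Import structures.
From mathcomp Require Import all_boot all_order all_algebra.
From mathcomp Require Import all_classical all_reals all_analysis.
Set Implicit Arguments. Unset Strict Implicit. Unset Printing Implicit Defensive.
Import Order.TTheory GRing.Theory Num.Theory.
Import numFieldNormedType.Exports.
Local Open Scope classical_set_scope.
Local Open Scope ring_scope.

(* Euclidean norm on R^d (the library norm on 'rV_d is the max norm). *)
Definition enorm (R : realType) (d : nat) (v : 'rV[R]_d) : R :=
  Num.sqrt (\sum_(i < d) v ord0 i ^+ 2).

Definition kern (R : realType) (d : nat) (Psi : 'rV[R]_d -> R) (ell : R)
  (x x' : 'rV[R]_d) : R := Psi (ell^-1 *: (x - x')).

Definition Wt (R : realType) (d : nat) (Psi : 'rV[R]_d -> R) (ell : R)
  (pts : nat -> 'rV[R]_d) (t : nat) (x : 'rV[R]_d) : R :=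
  \sum_(1 <= i < t.+1) kern Psi ell x (pts i).

(* Fill distance h_{X, X_t} = sup_{x in X} min_{1<=i<=t} |x - x_i|
   (extended-real valued; equals +oo for t = 0 by the empty-min convention). *)
Definition fill_distance (R : realType) (d : nat) (X : set 'rV[R]_d)
  (pts : nat -> 'rV[R]_d) (t : nat) : \bar R :=
  ereal_sup [set (\big[Order.min/+oo%E]_(1 <= i < t.+1) (enorm (x - pts i))%:E)
            | x in X].

(* The sequence is generated by density-based exploration with bandwidths ell_t:
   for every t >= 0, x_{t+1} in X and x_{t+1} in argmin_{x in X} W_t(x)
   (for t = 0, W_0 = 0 so this only says x_1 in X). *)
Definition density_exploration (R : realType) (d : nat) (X : set 'rV[R]_d)
  (Psi : 'rV[R]_d -> R) (ell : nat -> R) (pts : nat -> 'rV[R]_d) : Prop :=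
  forall t : nat, X (pts t.+1) /\
    (forall y, X y -> Wt Psi (ell t) pts t (pts t.+1) <= Wt Psi (ell t) pts t y).

(* Let r > 0 be such that Psi does not vanish on the open max-norm ball of
   radius r.  If at some step the fill distance exceeds R_Psi * ell, some x in X
   lies outside the support of every kernel bump, so W_t(x) = 0; hence the
   minimiser x_{t+1} also has W_t(x_{t+1}) = 0, and therefore lies at distance
   at least r * ell from all previous points.  A compact set contains no
   r * ell-separated sequence of more than N(r * ell) points, which gives (i).
   For (ii) the bandwidth is kept equal to 1/(k+1) on the k-th of consecutive
   blocks, each long enough for the packing argument at scale r/(k+1); block k
   then contains a step with fill distance at most R_Psi/(k+1). *)
From HB Require Import structures.
From mathcomp Require Import all_boot all_order all_algebra.
From mathcomp Require Import all_classical all_reals all_analysis.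
Import Order.TTheory GRing.Theory Num.Theory.
Import numFieldNormedType.Exports.
Set Implicit Arguments. Unset Strict Implicit. Unset Printing Implicit Defensive.
Local Open Scope classical_set_scope.
Local Open Scope ring_scope.

Lemma enorm_ge0 (R : realType) (d : nat) (v : 'rV[R]_d) : 0 <= enorm v.
Proof. exact: sqrtr_ge0. Qed.

Lemma enormZ (R : realType) (d : nat) (a : R) (v : 'rV[R]_d) :
  enorm (a *: v) = `|a| * enorm v.
Proof.
rewrite /enorm; under eq_bigr => i _ do rewrite mxE exprMn.
by rewrite -mulr_sumr sqrtrM ?sqr_ge0 // sqrtr_sqr.
Qed.

Lemma continuous_neq0_ball (R : realType) (V : normedModType R) (f : V -> R)
    (a : V) :
  {for a, continuous f} -> 0 < f a ->
  exists2 r : R, 0 < r & forall z, `|z - a| < r -> f z != 0.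
Proof.
move=> fa fa0.
have /(nbhs_ballP _ _).1[r r0 near_a] : \forall z \near a, 0 < f z.
  exact: cvgr_gt _ fa _ fa0.
exists r => // z za; apply/lt0r_neq0/near_a.
by rewrite -ball_normE /= distrC.
Qed.

Definition close_pair_within (R : realType) (V : normedModType R) (X : set V)
    (eps : R) (N : nat) :=
  forall q : nat -> V, (forall m, X (q m)) ->
    exists i j : nat, (i < j <= N)%N /\ `|q i - q j| < eps.

(* Cover X by finitely many balls of radius eps/2 and apply the pigeonhole
   principle to their centres. *)
Lemma compact_close_pair (R : realType) (V : normedModType R) (X : set V)
    (eps : R) :
  compact X -> 0 < eps -> exists N : nat, close_pair_within X eps N.
Proof.
move=> cX eps0; have eps20 : 0 < eps / 2 by rewrite divr_gt0.
have := cX; rewrite compact_cover => /(_ _ X (fun c => ball c (eps / 2))).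
case=> [c _|x Xx|D _ cover].
- exact: ball_open.
- by exists x => //; exact: ballxx.
set cs := finmap.enum_fset D; exists (size cs) => q Xq.
have /choice[c cq] : forall m, exists c, c \in cs /\ ball c (eps / 2) (q m).
  by move=> m; have [c /= cD qc] := cover _ (Xq m); exists c.
have : ~~ uniq (map c (iota 0 (size cs).+1)).
  apply/negP => /uniq_leq_size cs_le.
  suff : ((size cs).+1 <= size cs)%N by rewrite ltnn.
  rewrite -{1}(size_iota 0 (size cs).+1) -(size_map c).
  by apply: (cs_le cs) => _ /mapP[m _ ->]; case: (cq m).
move=> /(uniqPn (c 0%N))[i [j [ij]]]; rewrite size_map size_iota => jN.
rewrite !(nth_map 0%N) ?size_iota ?(ltn_trans ij) //.
rewrite !nth_iota ?(ltn_trans ij) // !add0n => cij.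
exists i, j; split; first by rewrite ij -ltnS.
have [_ qi] := cq i; have [_ qj] := cq j.
move: qi qj; rewrite -!ball_normE /= cij => qi qj.
rewrite (splitr eps); apply: le_lt_trans (ler_distD (c j) _ _) _.
by rewrite distrC ltrD.
Qed.

Definition fill_distance_inf (R : realType) (d : nat) (X : set 'rV[R]_d)
    (pts : nat -> 'rV[R]_d) : \bar R :=
  ereal_inf [set fill_distance X pts t | t in [set t : nat | (0 < t)%N]].

Section FillDistance.
Variables (R : realType) (d : nat) (X : set 'rV[R]_d) (pts : nat -> 'rV[R]_d).

Lemma fill_distance_ge0 t : X !=set0 -> (0 <= fill_distance X pts t)%E.
Proof.
move=> [x Xx]; apply: le_trans (ereal_sup_ubound _); last by exists x.
by apply: le_bigmin => // i _; rewrite lee_fin enorm_ge0.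
Qed.

Lemma fill_distance_gtP t (c : R) : (c%:E < fill_distance X pts t)%E ->
  exists2 x, X x & forall i, (0 < i <= t)%N -> c < enorm (x - pts i).
Proof.
move=> /ereal_sup_gt[_ [x Xx <-] c_lt]; exists x => // i it.
rewrite -lte_fin; apply: lt_le_trans c_lt _.
by apply: ge_bigmin_seq; rewrite ?mem_index_iota.
Qed.

End FillDistance.

Section KernelDensity.
Variables (R : realType) (d : nat) (Psi : 'rV[R]_d -> R) (RPsi : R).
Hypothesis Psi_ge0 : forall z, 0 <= Psi z.
Hypothesis Psi_supp : forall z, Psi z != 0 -> enorm z <= RPsi.

Lemma kern_ge0 ell x y : 0 <= kern Psi ell x y.
Proof. exact: Psi_ge0. Qed.

Lemma kern_le_Wt ell pts t x i :
  (0 < i <= t)%N -> kern Psi ell x (pts i) <= Wt Psi ell pts t x.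
Proof.
move=> it; rewrite /Wt (bigD1_seq i) ?mem_index_iota ?iota_uniq //=.
by rewrite lerDl sumr_ge0 // => j _; exact: kern_ge0.
Qed.

Lemma kern_eq0_far ell x y :
  0 < ell -> RPsi * ell < enorm (x - y) -> kern Psi ell x y = 0.
Proof.
move=> ell0 far; apply/eqP; apply: contraTT far => /Psi_supp.
rewrite enormZ gtr0_norm ?invr_gt0 // -leNgt => le_RPsi.
by rewrite mulrC -ler_pdivrMl.
Qed.

Lemma Wt_eq0_far ell pts t x : 0 < ell ->
  (forall i, (0 < i <= t)%N -> RPsi * ell < enorm (x - pts i)) ->
  Wt Psi ell pts t x = 0.
Proof.
move=> ell0 far; rewrite /Wt big_nat_cond big1 // => i.
move=> /andP[/andP[i_gt0 i_le] _]; apply: kern_eq0_far ell0 (far i _).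
by rewrite i_gt0 -ltnS.
Qed.

Variable r : R.
Hypothesis Psi_neq0 : forall z, `|z| < r -> Psi z != 0.

Lemma kern_eq0_dist_ge ell x y :
  0 < ell -> kern Psi ell x y = 0 -> r * ell <= `|x - y|.
Proof.
move=> ell0 /eqP; apply: contraTT; rewrite -ltNge => near.
apply: Psi_neq0; rewrite normrZ gtr0_norm ?invr_gt0 //.
by rewrite mulrC ltr_pdivrMr.
Qed.

Lemma argmin_Wt_separated X ell pts t : 0 < ell ->
  (forall y, X y -> Wt Psi ell pts t (pts t.+1) <= Wt Psi ell pts t y) ->
  ((RPsi * ell)%:E < fill_distance X pts t)%E ->
  forall i, (0 < i <= t)%N -> r * ell <= `|pts t.+1 - pts i|.
Proof.
move=> ell0 argmin /fill_distance_gtP[x Xx far] i it.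
have Wx0 : Wt Psi ell pts t x = 0 by exact: Wt_eq0_far.
apply: kern_eq0_dist_ge => //; apply/eqP; rewrite eq_le kern_ge0 andbT.
rewrite -Wx0; apply: le_trans (argmin x Xx).
exact: kern_le_Wt.
Qed.

End KernelDensity.

(* Block k of the bandwidth schedule is [block_start g k, block_start g k.+1),
   of length (g k).+1; block_index g t is the block containing t. *)
Definition block_start (g : nat -> nat) (k : nat) : nat :=
  (\sum_(0 <= j < k) (g j).+1)%N.

Definition block_index (g : nat -> nat) (t : nat) : nat :=
  (\max_(k < t.+1 | (block_start g k <= t)%N) k)%N.

Section Blocks.
Variable g : nat -> nat.

Lemma block_startS k : block_start g k.+1 = (block_start g k + (g k).+1)%N.
Proof. by rewrite /block_start big_nat_recr. Qed.

Lemma block_start_homo : {homo block_start g : m n / (m <= n)%N}.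
Proof.
move=> m n /subnK <-; elim: (n - m)%N => [|p IH]; first by rewrite add0n.
by rewrite addSn block_startS (leq_trans IH) // leq_addr.
Qed.

Lemma block_start_ge k : (k <= block_start g k)%N.
Proof. by elim: k => [|k IH] //; rewrite block_startS -addn1 leq_add. Qed.

Lemma block_index_ge k t : (block_start g k <= t)%N -> (k <= block_index g t)%N.
Proof.
move=> kt; have kt1 : (k < t.+1)%N.
  by rewrite ltnS (leq_trans (block_start_ge k)).
exact: (@leq_bigmax_cond _ (fun i : 'I_t.+1 => block_start g i <= t)%N
  (fun i : 'I_t.+1 => nat_of_ord i) (Ordinal kt1)).
Qed.

Lemma block_indexE k t :
  (block_start g k <= t < block_start g k.+1)%N -> block_index g t = k.
Proof.
move=> /andP[kt tk]; apply/eqP; rewrite eqn_leq block_index_ge // andbT.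
apply/bigmax_leqP => i /= it; rewrite leqNgt; apply/negP => ki.
by move: (leq_trans tk (block_start_homo ki)); rewrite leqNgt ltnS it.
Qed.

Lemma block_bandwidth_cvg0 (R : realType) :
  (fun t => ((block_index g t).+1%:R : R)^-1) @ \oo --> 0.
Proof.
apply/cvgrPdist_lt => e e0; near=> t.
rewrite sub0r normrN ger0_norm // invf_plt ?posrE //.
apply: lt_le_trans (truncnS_gt _) _; rewrite ler_nat ltnS.
apply: block_index_ge; near: t; exact: nbhs_infty_ge.
Unshelve. all: by end_near.
Qed.

End Blocks.

Lemma lee0_le_div_succ (R : realType) (x : \bar R) (c : R) : 0 <= c ->
  (forall k : nat, x <= (c / k.+1%:R)%:E)%E -> (x <= 0)%E.
Proof.
move=> c0 x_le; case: x x_le => [a| |] x_le //; last by have := x_le 0%N.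
rewrite lee_fin leNgt; apply/negP => a0.
set k := Num.truncn (c / a); have := x_le k.
rewrite lee_fin ler_pdivlMr // -ler_pdivlMl // mulrC => le_trunc.
by have := lt_le_trans (truncnS_gt (c / a)) le_trunc; rewrite ltxx.
Qed.

Section Exploration.
Variables (R : realType) (d : nat) (X : set 'rV[R]_d) (Psi : 'rV[R]_d -> R).
Variables (RPsi r : R).
Hypothesis Psi_ge0 : forall z, 0 <= Psi z.
Hypothesis Psi_supp : forall z, Psi z != 0 -> enorm z <= RPsi.
Hypothesis Psi_neq0 : forall z, `|z| < r -> Psi z != 0.

(* If every step t in [t0, t0 + N] had fill distance above R_Psi * ell, the
   points x_{t0+1}, ..., x_{t0+N+1} would be (r * ell)-separated. *)
Lemma fill_distance_inf_le_window ell pts t0 N :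
  0 < ell -> (forall m, X (pts m.+1)) ->
  (forall t, (t0 <= t <= t0 + N)%N -> forall y, X y ->
     Wt Psi ell pts t (pts t.+1) <= Wt Psi ell pts t y) ->
  close_pair_within X (r * ell) N ->
  (fill_distance_inf X pts <= (RPsi * ell)%:E)%E.
Proof.
move=> ell0 Xpts argmin packing; rewrite leNgt; apply/negP => fill_gt.
have [i [j [/andP[ij jN] close]]] := packing (fun m => pts (t0 + m).+1)
  (fun m => Xpts _).
have jt : (t0 <= t0 + j <= t0 + N)%N by rewrite leq_addr leq_add2l.
have fill_gt_j : ((RPsi * ell)%:E < fill_distance X pts (t0 + j))%E.
  apply: lt_le_trans fill_gt (ereal_inf_lbound _); exists (t0 + j)%N => //.
  by rewrite /= addn_gt0 (leq_ltn_trans _ ij) ?orbT.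
have i_lt_j : (0 < (t0 + i).+1 <= t0 + j)%N by rewrite ltn_add2l.
have := argmin_Wt_separated Psi_ge0 Psi_supp Psi_neq0 ell0 (argmin _ jt)
  fill_gt_j i_lt_j.
by rewrite leNgt distrC close.
Qed.

Lemma fill_distance_inf_le_fixed ell pts : compact X -> 0 < r -> 0 < ell ->
  density_exploration X Psi (fun _ => ell) pts ->
  (fill_distance_inf X pts <= (RPsi * ell)%:E)%E.
Proof.
move=> cX r_gt0 ell0 expl.
have [N packing] := compact_close_pair cX (mulr_gt0 r_gt0 ell0).
apply: (fill_distance_inf_le_window (t0 := 0) ell0 _ _ packing).
- by move=> m; case: (expl m).
- by move=> t _; case: (expl t).
Qed.

Lemma fill_distance_inf_eq0_blocks g pts : X !=set0 -> 0 <= RPsi ->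
  (forall k, close_pair_within X (r / k.+1%:R) (g k)) ->
  density_exploration X Psi (fun t => ((block_index g t).+1%:R)^-1) pts ->
  fill_distance_inf X pts = 0%E.
Proof.
move=> X0 RPsi_ge0 packing expl; apply/le_anti/andP; split; last first.
  by apply: le_ereal_inf_tmp => _ [t _ <-]; exact: fill_distance_ge0.
apply: (lee0_le_div_succ RPsi_ge0) => k.
have ell_k t : (block_start g k <= t <= block_start g k + g k)%N ->
    ((block_index g t).+1%:R : R)^-1 = k.+1%:R^-1.
  by move=> tk; rewrite (@block_indexE _ k) // block_startS addnS ltnS.
apply: (fill_distance_inf_le_window (t0 := block_start g k) _ _ _ (packing k)).
- by rewrite invr_gt0.
- by move=> m; case: (expl m).
- by move=> t tk; rewrite -(ell_k t tk); case: (expl t).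
Qed.

End Exploration.

Theorem mainTheorem6 (R : realType) (d : nat) (X : set 'rV[R]_d)
  (Psi : 'rV[R]_d -> R) (RPsi MPsi : R) :
  compact X -> convex_set (X : set (convex_lmodType 'rV[R]_d)) ->
  (X°) !=set0 ->
  (forall z, 0 <= Psi z) ->
  (forall z, Psi z != 0 -> enorm z <= RPsi) ->
  {for 0, continuous Psi} -> 0 < Psi 0 ->
  (forall z, Psi z <= MPsi) ->
  (forall (ell : R) (pts : nat -> 'rV[R]_d), 0 < ell ->
     density_exploration X Psi (fun _ => ell) pts ->
     (ereal_inf [set fill_distance X pts t | t in [set t : nat | (0 < t)%N]]
       <= (RPsi * ell)%:E)%E)
  /\
  (exists ell : nat -> R, (forall t, 0 < ell t) /\ ell @ \oo --> 0 /\
     forall pts : nat -> 'rV[R]_d, density_exploration X Psi ell pts ->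
       ereal_inf [set fill_distance X pts t | t in [set t : nat | (0 < t)%N]]
         = 0%E).
Proof.
move=> cX _ [x0 /interior_subset X0] Psi_ge0 Psi_supp Psi_cont Psi0_gt0 _.
have [r r_gt0 Psi_neq0] := continuous_neq0_ball Psi_cont Psi0_gt0.
have {}Psi_neq0 z : `|z| < r -> Psi z != 0.
  by move=> z_lt; apply: Psi_neq0; rewrite subr0.
have RPsi_ge0 : 0 <= RPsi.
  exact: le_trans (enorm_ge0 0) (Psi_supp _ (lt0r_neq0 Psi0_gt0)).
split=> [ell pts ell_gt0|].
  exact: (fill_distance_inf_le_fixed Psi_ge0 Psi_supp Psi_neq0 cX r_gt0 ell_gt0).
have /choice[g packing] k : exists N, close_pair_within X (r / k.+1%:R) N.
  by apply: compact_close_pair; rewrite ?divr_gt0.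
exists (fun t => ((block_index g t).+1%:R)^-1).
split=> [t|]; first by rewrite invr_gt0.
split; first exact: block_bandwidth_cvg0.
move=> pts; have X_neq0 : X !=set0 by exists x0.
exact: (fill_distance_inf_eq0_blocks Psi_ge0 Psi_supp Psi_neq0 X_neq0 RPsi_ge0
  packing).
Qed.
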